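(* Let $K$ be a field, $S=K[x_1,\ldots,x_n]$, $I\subset S$ a monomial ideal with $I\ne S$, and let $\lambda^{(1)},\ldots,\lambda^{(p)}$ be the scalar matrices of the $\mathbb{Z}^n$-graded minimal free resolution of $S/I$ (see context). Then the sequence of $K$-linear maps \[ 0\to K^{\beta_p}\xrightarrow{\lambda^{(p)}}K^{\beta_{p-1}}\xrightarrow{\lambda^{(p-1)}}\cdots\xrightarrow{\lambda^{(2)}}K^{\beta_1}\xrightarrow{\lambda^{(1)}}K\to0 \] is an exact complex.
   Context: Let $G(I)=\{x^{a_1},\ldots,x^{a_m}\}$ be the minimal monomial generators, $x^a=x_1^{a(1)}\cdots x_n^{a(n)}$. Let $0\to F_p\to\cdots\to F_1\to F_0\to S/I\to 0$ be the $\mathbb{Z}^n$-graded minimal free resolution of $S/I$ with differential $\partial$, where $F_0=S$ with basis $f_{01}$ of degree $0$, and $F_i=\bigoplus_{j=1}^{\beta_i}Sf_{ij}$ with $f_{ij}$ homogeneous of multidegree $a_{ij}\in\mathbb{N}^n$; here $\beta_1=m$, $a_{1j}=a_j$ and $\partial(f_{1j})=x^{a_j}f_{01}$. Write $\partial(f_{ij})=\sum_k\lambda^{(i)}_{kj}x^{a_{ij}-a_{i-1,k}}f_{i-1,k}$ with $\lambda^{(i)}_{kj}\in K$, where $\lambda^{(i)}_{kj}=0$ whenever $a_{ij}-a_{i-1,k}\notin\mathbb{N}^n$. The scalar matrices are $\lambda^{(i)}=(\lambda^{(i)}_{kj})\in K^{\beta_{i-1}\times\beta_i}$, so $\lambda^{(1)}=(1,\ldots,1)$.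 *)

From HB Require Import structures.
From mathcomp Require Import all_boot all_order all_algebra.
From mathcomp Require Import mpoly.
Set Implicit Arguments. Unset Strict Implicit. Unset Printing Implicit Defensive.
Import GRing.Theory.
Local Open Scope ring_scope.

(* Monomials x^a are encoded by their exponent vectors a : 'X_{1..n}
   (= N^n); 'X_[a] is the monomial polynomial x^a in {mpoly K[n]}.
   The free S-module F_i = S^{beta i} is represented by column vectors
   'cV[{mpoly K[n]}]_(beta i); a map F_i -> F_{i-1} by a
   (beta (i-1)) x (beta i) matrix acting on the left (column j = image of
   the basis vector f_{ij}). *)

Definition exact_at (R : comNzRingType) (m k l : nat)
  (A : 'M[R]_(m, k)) (B : 'M[R]_(k, l)) : Prop :=
  forall v : 'cV[R]_k, A *m v = 0 <-> exists w : 'cV[R]_l, v = B *m w.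

Definition res_diff (K : fieldType) (n : nat) (beta : nat -> nat)
  (deg : forall i : nat, 'I_(beta i) -> 'X_{1..n})
  (lam : forall i : nat, 'M[K]_(beta i.-1, beta i)) (i : nat)
  : 'M[{mpoly K[n]}]_(beta i.-1, beta i) :=
  \matrix_(k, j) ((lam i k j)%:MP * 'X_[(deg i j - deg i.-1 k)%MM]).

(* (p, beta, deg, lam) describe a Z^n-graded minimal free resolution
   0 -> F_p -> ... -> F_1 -> F_0 = S of S/(image of d_1):
   - F_0 = S with one basis element of degree 0;
   - F_i = 0 for i > p;
   - lambda^{(i)}_{kj} = 0 whenever a_{ij} - a_{i-1,k} is not in N^n
     (so d is homogeneous of multidegree 0);
   - minimality: d(F_i) lies in m F_{i-1}, i.e. no unit entries:
     lambda^{(i)}_{kj} = 0 whenever a_{ij} = a_{i-1,k};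
   - the complex of free S-modules is exact at every F_i, i >= 1
     (exactness at F_0 -> S/I is the statement coker d_1 = S/I, which holds
     by construction once d_1 = (x^{a_1} ... x^{a_m})). *)
Definition is_Zn_graded_min_free_res (K : fieldType) (n p : nat)
  (beta : nat -> nat) (deg : forall i : nat, 'I_(beta i) -> 'X_{1..n})
  (lam : forall i : nat, 'M[K]_(beta i.-1, beta i)) : Prop :=
  [/\ beta 0 = 1%N,
      (forall i, (p < i)%N -> beta i = 0%N) /\
      (forall k : 'I_(beta 0), deg 0%N k = 0%MM),
      (forall (i : nat) k j, (1 <= i)%N -> lam i k j != 0 ->
          (deg i.-1 k <= deg i j)%MM),
      (forall (i : nat) k j, (1 <= i)%N -> deg i j = deg i.-1 k ->
          lam i k j = 0)
    & (forall i : nat, (1 <= i)%N ->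
          exact_at (res_diff deg lam i) (res_diff deg lam i.+1))].

Definition min_mon_gens (n m : nat) (a : 'I_m -> 'X_{1..n}) : Prop :=
  forall j k : 'I_m, (a j <= a k)%MM -> j = k.

Definition mon_ideal (K : fieldType) (n m : nat) (a : 'I_m -> 'X_{1..n})
  (f : {mpoly K[n]}) : Prop :=
  exists c : 'I_m -> {mpoly K[n]}, f = \sum_(j < m) c j * 'X_[a j].

(* Exactness of  0 -> K^{beta p} -> ... -> K^{beta 1} -> K -> 0
   with maps lam p, ..., lam 1 : exact at K (lam 1 is onto) and exact at
   every K^{beta i}, 1 <= i <= p (at K^{beta p} this is injectivity of
   lam p, as beta (p+1) = 0). *)
Definition scalar_complex_exact (K : fieldType) (p : nat) (beta : nat -> nat)
  (lam : forall i : nat, 'M[K]_(beta i.-1, beta i)) : Prop :=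
  (forall u : 'cV[K]_(beta 0), exists w : 'cV[K]_(beta 1), u = lam 1%N *m w)
  /\ (forall i : nat, (1 <= i <= p)%N -> exact_at (lam i) (lam i.+1)).

From HB Require Import structures.
From mathcomp Require Import all_boot all_order all_algebra.
From mathcomp Require Import mpoly.
Set Implicit Arguments. Unset Strict Implicit. Unset Printing Implicit Defensive.
Import GRing.Theory.
Local Open Scope ring_scope.

(* Specializing every variable to 1 sends the graded differential d_i to its
   scalar matrix lambda^(i), so d_i d_(i+1) = 0 gives lambda^(i) lambda^(i+1) = 0.
   Conversely a scalar cycle v of lambda^(i) lifts to the homogeneous cycle
   (v_j x^(c - a_ij))_j of d_i, where c bounds all the a_ij; a graded preimage
   under d_(i+1) then specializes to a scalar preimage of v under lambda^(i+1). *)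

Section Specialization.

Variables (K : fieldType) (n : nat).

Definition mev1 (f : {mpoly K[n]}) : K := meval (fun _ => 1) f.

Lemma mev1CX c (m : 'X_{1..n}) : mev1 (c%:MP * 'X_[m]) = c.
Proof.
by rewrite /mev1 mevalM mevalC mevalX big1 ?mulr1 // => i _; rewrite expr1n.
Qed.

Lemma map_mev1M r s t (A : 'M[{mpoly K[n]}]_(r, s)) (B : 'M_(s, t)) :
  map_mx mev1 (A *m B) = map_mx mev1 A *m map_mx mev1 B.
Proof. exact: map_mxM. Qed.

Lemma map_mev1_0 r s : map_mx mev1 (0 : 'M[{mpoly K[n]}]_(r, s)) = 0.
Proof. exact: map_mx0. Qed.

Lemma map_mev1_C r s (A : 'M[K]_(r, s)) : map_mx mev1 (map_mx (@mpolyC n K) A) = A.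
Proof. by apply/matrixP => i j; rewrite !mxE /mev1 mevalC. Qed.

Lemma exists_mnm_ub b (d : 'I_b -> 'X_{1..n}) : exists c, forall j, (d j <= c)%MM.
Proof. by exists (\sum_j d j)%MM => j; rewrite (bigD1 j) //= lem_addr. Qed.

Definition homog_lift b (d : 'I_b -> 'X_{1..n}) (c : 'X_{1..n}) (v : 'cV[K]_b) :
  'cV[{mpoly K[n]}]_b := \col_j ((v j 0)%:MP * 'X_[(c - d j)%MM]).

Lemma map_mev1_homog_lift b (d : 'I_b -> 'X_{1..n}) c v :
  map_mx mev1 (homog_lift d c v) = v.
Proof. by apply/matrixP => j z; rewrite (ord1 z) !mxE mev1CX. Qed.

Lemma homog_lift0 b (d : 'I_b -> 'X_{1..n}) c : homog_lift d c 0 = 0.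
Proof. by apply/matrixP => j z; rewrite !mxE mpolyC0 mul0r. Qed.

End Specialization.

Unset Implicit Arguments.
Section ScalarMatrices.

Variables (K : fieldType) (n : nat) (beta : nat -> nat)
  (deg : forall i : nat, 'I_(beta i) -> 'X_{1..n})
  (lam : forall i : nat, 'M[K]_(beta i.-1, beta i)).

Lemma map_mev1_res_diff i : map_mx (@mev1 K n) (res_diff deg lam i) = lam i.
Proof. by apply/matrixP => k j; rewrite !mxE mev1CX. Qed.

Lemma res_diff_homog_lift i c v :
  (forall k j, lam i k j != 0 -> (deg i.-1 k <= deg i j)%MM) ->
  (forall j, (deg i j <= c)%MM) ->
  res_diff deg lam i *m homog_lift (deg i) c v
  = homog_lift (deg i.-1) c (lam i *m v).
Proof.
move=> deg_le le_c; apply/matrixP => k z; rewrite !mxE raddf_sum mulr_suml.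
apply: eq_bigr => j _; rewrite !mxE /= mpolyCM.
have [->|/deg_le le_kj] := eqVneq (lam i k j) 0; first by rewrite !(mpolyC0, mul0r).
rewrite mulrACA -mpolyXD; congr (_ * 'X_[_]); apply/mnmP => t.
move: le_kj (le_c j) => /mnm_lepP/(_ t) le1 /mnm_lepP/(_ t) le2.
by rewrite mnmDE !mnmBE addnC addnBA // subnK.
Qed.

Lemma exact_at_scalar i :
  (forall k j, lam i k j != 0 -> (deg i.-1 k <= deg i j)%MM) ->
  exact_at (res_diff deg lam i) (res_diff deg lam i.+1) ->
  exact_at (lam i) (lam i.+1).
Proof.
move=> deg_le exact_i v; split=> [lam_v0 | [w ->]].
- have [c le_c] := exists_mnm_ub (deg i).
  have [W liftW] : exists W, homog_lift (deg i) c v = res_diff deg lam i.+1 *m W.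
    by apply/exact_i; rewrite res_diff_homog_lift // lam_v0 homog_lift0.
  exists (map_mx (@mev1 K n) W).
  by rewrite -map_mev1_res_diff -map_mev1M -liftW map_mev1_homog_lift.
- have := (exact_i _).2 (ex_intro _ (map_mx (@mpolyC n K) w) erefl).
  move/(congr1 (map_mx (@mev1 K n))).
  by rewrite !map_mev1M map_mev1_res_diff (map_mev1_res_diff i.+1) map_mev1_C map_mev1_0.
Qed.

End ScalarMatrices.

Lemma onto_of_col_ones (K : fieldType) r s (A : 'M[K]_(r, s)) (j0 : 'I_s) :
  (r <= 1)%N -> (forall k, A k j0 = 1) ->
  forall u : 'cV[K]_r, exists w, u = A *m w.
Proof.
case: r A => [|[|//]] A _ A1 u; first by exists 0; apply/matrixP => -[].
exists (\col_j (if j == j0 then u 0 0 else 0)); apply/matrixP => k z.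
rewrite !ord1 mxE (bigD1 j0) //= big1 => [|j /negbTE nj]; last by rewrite mxE nj mulr0.
by rewrite mxE eqxx A1 mul1r addr0.
Qed.

Theorem lemma1p3 (K : fieldType) (n m : nat) (a : 'I_m -> 'X_{1..n})
  (p : nat) (beta : nat -> nat) (deg : forall i : nat, 'I_(beta i) -> 'X_{1..n})
  (lam : forall i : nat, 'M[K]_(beta i.-1, beta i)) (Hb0 : beta 0%N = 1%N) (Hb1 : beta 1%N = m) :
  (0 < m)%N ->
  (forall j, a j != 0%MM) ->
  min_mon_gens a ->
  (forall j : 'I_(beta 1%N), deg 1%N j = a (cast_ord Hb1 j)) ->
  (forall (k : 'I_(beta 0%N)) (j : 'I_(beta 1%N)), lam 1%N k j = 1) ->
  is_Zn_graded_min_free_res p deg lam ->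
  (* the resolution resolves S/I: image of d_1 : F_1 -> F_0 = S is I *)
  (forall f : {mpoly K[n]}, mon_ideal a f <->
     exists w : 'cV[{mpoly K[n]}]_(beta 1%N),
       f = (res_diff deg lam 1%N *m w) (cast_ord (esym Hb0) ord0) ord0) ->
  scalar_complex_exact p lam.
Proof.
move=> m_gt0 _ _ _ lam1_ones [_ _ deg_le _ exact_res] _; split.
- have j0 : 'I_(beta 1) by rewrite Hb1; exact: Ordinal m_gt0.
  by apply: (@onto_of_col_ones K _ _ (lam 1%N) j0); rewrite ?Hb0.
- move=> i /andP[i_gt0 _].
  apply: exact_at_scalar; last exact: exact_res.
  by move=> k j; apply: deg_le.
Qed.
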